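(* Let $G$ be a countable group, and let $X$ be a proper metric space equipped with a $G$-action by isometries. Assume that there exist a compact metrizable $G$-space $K$ that does not carry any $G$-invariant probability measure, and a $G$-invariant Borel subset $K^*\subseteq K$ which contains a Borel subset homeomorphic to a Cantor set. Assume in addition that for every sequence $(g_n)_{n\in\mathbb N}$ in $G$ that escapes every compact subspace of $X$, there exist a subsequence $(g_{\sigma(n)})_{n\in\mathbb N}$ and points $\xi^-,\xi^+\in K$ such that for all $\xi\in K^*\setminus\{\xi^-\}$, the sequence $(g_{\sigma(n)}\xi)_{n\in\mathbb N}$ converges to $\xi^+$. Then the $G$-action on $X$ is properly proximal.
   Context: A sequence $(g_n)$ in $G$ escapes every compact subspace of $X$ if for some (equivalently any) $x\in X$, $(g_nx)$ eventually leaves every compact subset. The $G$-action on $X$ is properly proximal if there exist finitely many compact metrizable $G$-spaces $K_1,\dots,K_\ell$, none carrying a $G$-invariant probability measure, and diffuse probability measures $\eta_i$ on $K_i$, such that for every sequence $(g_n)$ escaping every compact subspace of $X$, there exist $i$ and a subsequence $(g_{\sigma(n)})$ with $g_{\sigma(n)}h\eta_i-g_{\sigma(n)}\eta_i\to0$ weak-$*$ for every $h\in G$. *)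

From HB Require Import structures.
From mathcomp Require Import all_boot all_order all_algebra.
From mathcomp Require Import all_classical all_reals all_analysis.
Set Implicit Arguments.
Unset Strict Implicit.
Unset Printing Implicit Defensive.
Import Order.TTheory GRing.Theory Num.Theory.
Import numFieldNormedType.Exports.
Local Open Scope classical_set_scope.
Local Open Scope ring_scope.

(* Pointed metric spaces (pointedness is needed to build the Borel
   measurable structure; it only says the space is nonempty). *)
#[short(type="pmetricType")]
HB.structure Definition PMetric (K : numDomainType) :=
  { M of Pointed M & Metric K M }.

Record group_law (G : Type) := GroupLaw {
  gmul : G -> G -> G;
  gone : G;
  ginv : G -> G;
  gmulA : forall x y z, gmul x (gmul y z) = gmul (gmul x y) z;
  gmul1g : forall x, gmul gone x = x;
  gmulVg : forall x, gmul (ginv x) x = gone }.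

Definition is_action (G : Type) (Gl : group_law G) (T : Type)
  (a : G -> T -> T) : Prop :=
  (forall x, a (gone Gl) x = x) /\
  (forall g h x, a (gmul Gl g h) x = a g (a h x)).

Definition borel (T : ptopologicalType) := g_sigma_algebraType (@open T).

Section defs.
Variable R : realType.
Variables (G : Type) (Gl : group_law G).

Definition compact_G_space (K : pmetricType R) (a : G -> K -> K) : Prop :=
  compact [set: K] /\ is_action Gl a /\ (forall g, continuous (a g)).

Definition gpush (K : pmetricType R) (a : K -> K)
  (mu : set (borel K) -> \bar R) : set (borel K) -> \bar R :=
  @pushforward _ _ (borel K) (borel K) R mu (a : borel K -> borel K).

Definition invariant_measure (K : pmetricType R) (a : G -> K -> K)
  (mu : set (borel K) -> \bar R) : Prop :=
  forall g (A : set (borel K)), measurable A -> gpush (a g) mu A = mu A.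

Definition carries_invariant_probability (K : pmetricType R)
  (a : G -> K -> K) : Prop :=
  exists mu : probability (borel K) R, invariant_measure a mu.

Definition diffuse (K : pmetricType R) (mu : set (borel K) -> \bar R) : Prop :=
  forall x : K, mu [set x] = 0%E.

Definition integ (K : pmetricType R) (mu : set (borel K) -> \bar R)
  (f : K -> R) : R := fine (\int[mu]_x (f x)%:E).

Definition wstar_diff_to0 (K : pmetricType R)
  (mu nu : nat -> set (borel K) -> \bar R) : Prop :=
  forall f : K -> R, continuous f ->
    (fun n => integ (mu n) f - integ (nu n) f) @ \oo --> 0.

Definition proper_metric (X : metricType R) : Prop :=
  forall (x : X) (r : R), compact [set y | mdist x y <= r].

Definition isometric_action (X : metricType R) (a : G -> X -> X) : Prop :=
  is_action Gl a /\ (forall g x y, mdist (a g x) (a g y) = mdist x y).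

Definition escapes (X : metricType R) (a : G -> X -> X) (g : nat -> G) : Prop :=
  exists x : X, forall C : set X, compact C ->
    \forall n \near \oo, ~ C (a (g n) x).

Definition strictly_increasing (s : nat -> nat) : Prop :=
  forall n, (s n < s n.+1)%N.

Definition properly_proximal (X : metricType R) (a : G -> X -> X) : Prop :=
  exists (l : nat) (K : 'I_l -> pmetricType R) (aK : forall i, G -> K i -> K i)
    (eta : forall i, probability (borel (K i)) R),
    (forall i, compact_G_space (aK i)) /\
    (forall i, ~ carries_invariant_probability (aK i)) /\
    (forall i, diffuse (eta i)) /\
    (forall g : nat -> G, escapes a g ->
       exists (i : 'I_l) (s : nat -> nat), strictly_increasing s /\
         forall h : G,
           wstar_diff_to0 (fun n => gpush (aK i (gmul Gl (g (s n)) h)) (eta i))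
                          (fun n => gpush (aK i (g (s n))) (eta i))).

Definition borel_cantor_subset (K : pmetricType R) (B : set K) : Prop :=
  @measurable _ (borel K) B /\
  exists (f : cantor_space -> K) (f' : K -> cantor_space),
    continuous f /\ f @` setT = B /\
    (forall z, f' (f z) = z) /\ {within B, continuous f'}.
End defs.

(* The Cantor set inside K* carries a diffuse probability eta: push the
   uniform distribution on [0, 1] through the injective Borel map sending a
   real x to the set of rationals above it.  Given an escaping sequence,
   pass to the subsequence along which g_n xi -> xi+ for xi in K* \ {xi-}.
   Since eta is diffuse and concentrated on the G-invariant set K*, for
   eta-almost every xi both g_n xi and g_n h xi tend to xi+, so by dominated
   convergence both g_n eta and g_n h eta converge weakly to the Dirac mass at
   xi+, and their difference tends to 0. *)
From HB Require Import structures.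
From mathcomp Require Import all_boot all_order all_algebra.
From mathcomp Require Import all_classical all_reals all_analysis.
From mathcomp Require Import measurable_realfun.
Import Order.TTheory GRing.Theory Num.Theory.
Import numFieldNormedType.Exports.
Local Open Scope classical_set_scope.
Local Open Scope ring_scope.
Set Implicit Arguments.
Unset Strict Implicit.
Unset Printing Implicit Defensive.

Definition cylinder (s : seq bool) : set cantor_space :=
  [set w | forall i, (i < size s)%N -> w i = nth false s i].

Lemma cylinder_mkseq (z : cantor_space) n : cylinder (mkseq z n) z.
Proof. by move=> i; rewrite size_mkseq => ilt; rewrite nth_mkseq. Qed.

Lemma open_cantor_cylinder (V : set cantor_space) (z : cantor_space) :
  open V -> V z -> exists n, cylinder (mkseq z n) `<=` V.
Proof.
(* Otherwise points outside V agreeing with z on ever longer prefixes would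
   converge to z. *)
move=> oV Vz; apply: contrapT => /forallNP noncyl.
have /choice[w wP] n : exists w, cylinder (mkseq z n) w /\ ~ V w.
  by have /nonsubset[w [? ?]] := noncyl n; exists w.
have wz : w @ \oo --> (z : cantor_space).
  apply/(@pointwise_cvgP nat bool _ z _) => i; apply: cvg_near_cst.
  exists i.+1 => // n /= ltin.
  by have := (wP n).1 i; rewrite size_mkseq nth_mkseq //; apply.
have [n _ /(_ n (leqnn n))] : \forall n \near \oo, V (w n).
  by apply: wz; apply: open_nbhs_nbhs.
exact: (wP n).2.
Qed.

Lemma measurable_fun_cantor d (T : measurableType d) (f : T -> borel cantor_space) :
  (forall n, measurable [set x | f x n]) -> measurable_fun setT f.
Proof.
move=> mf.
apply: (@measurability _ _ T (borel cantor_space) setT f (@open cantor_space)) => //.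
move=> _ [V oV <-].
have -> : setT `&` f @^-1` V =
    \bigcup_(s in [set s | cylinder s `<=` V]) f @^-1` cylinder s.
  apply/seteqP; split => [x [_ Vfx] | x [s sV /sV //]].
  have [n nV] := open_cantor_cylinder oV Vfx.
  by exists (mkseq (f x) n) => //; exact: cylinder_mkseq.
rewrite bigcup_mkcond; apply: countable_bigcupT_measurable => [|s].
  exact: countableP.
case: ifP => _; last exact: measurable0.
apply: fin_bigcap_measurable (finite_II _) _ => i _.
case: (nth false s i); first exact: mf.
rewrite (_ : (fun x => _) = ~` [set x | f x i]); first exact/measurableC/mf.
by apply/seteqP; split => x /=; case: (f x i).
Qed.

Section rational_cut.
Variable R : realType.

Definition rat_enum (n : nat) : R := ratr (odflt 0 (unpickle n)).

Definition rat_cut (x : R) : cantor_space := fun n => x < rat_enum n.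

Lemma rat_cut_inj : injective rat_cut.
Proof.
have rat_cut_neq x y : x < y -> rat_cut x <> rat_cut y.
  move=> /rat_in_itvoo[q]; rewrite in_itv /= => /andP[xq qy].
  move=> /(congr1 (fun w : cantor_space => w (pickle q))).
  by rewrite /rat_cut /rat_enum pickleK /= xq ltNge (ltW qy).
move=> x y exy; case: (ltgtP x y) => // /rat_cut_neq neq.
- by case: (neq exy).
- by case: (neq (esym exy)).
Qed.

Lemma measurable_rat_cut : measurable_fun setT (rat_cut : R -> borel cantor_space).
Proof. by apply: measurable_fun_cantor => n; rewrite -set_itvNyo; exact: measurable_itv. Qed.

End rational_cut.

Lemma continuous_borel_measurable (T U : ptopologicalType) (f : T -> U) :
  continuous f -> measurable_fun setT (f : borel T -> borel U).
Proof.
move=> cf; apply: (@measurability _ _ (borel T) (borel U) setT f (@open U)) => //.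
move=> _ [A oA <-]; apply: sub_sigma_algebra; rewrite setTI.
exact: (continuousP f).1 cf A oA.
Qed.

Lemma continuous_borel_measurable_real (R : realType) (T : ptopologicalType)
  (f : T -> R) : continuous f -> measurable_fun setT (f : borel T -> R).
Proof.
move=> cf; apply: (measurability _ (RGenOpens.measurableE R)).
move=> _ [_ [a [b ->]] <-]; apply: sub_sigma_algebra; rewrite setTI.
exact: (continuousP f).1 cf _ (interval_open _ _).
Qed.

Lemma borel_measurable_set1 (R : realType) (K : pmetricType R) (y : K) :
  measurable ([set y] : set (borel K)).
Proof.
rewrite -[X in measurable X]setCK; apply: measurableC; apply: sub_sigma_algebra.
exact/closed_openC/accessible_closed_set1/hausdorff_accessible/metric_hausdorff.
Qed.

Lemma ae_neq (R : realType) (K : pmetricType R)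
    (mu : {measure set (borel K) -> \bar R}) (y : K) :
  mu [set y] = 0%E -> \forall x \ae mu, x <> y.
Proof.
move=> mu_y; exists [set y]; split => //; first exact: borel_measurable_set1.
by move=> x /= /contrapT.
Qed.

Lemma uniform_prob_set1 (R : realType) (x : R) :
  uniform_prob (@ltr01 R) [set x] = 0%E.
Proof.
have := (null_content_dominatesP _ _).1 (dominates_uniform_prob (@ltr01 R)).
by apply; [exact: measurable_set1 | exact: lebesgue_measure_set1].
Qed.

Lemma finite_measure_integrable_bounded (R : realType) d (T : measurableType d)
    (mu : {finite_measure set T -> \bar R}) (g : T -> R) (M : R) :
  measurable_fun setT g -> (forall x, `|g x| <= M) -> mu.-integrable setT (EFin \o g).
Proof.
move=> mg gM; apply: (le_integrable _ _ _ (finite_measure_integrable_cst mu M measurableT)).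
- exact: measurableT.
- exact/measurable_EFinP.
- by move=> x _ /=; rewrite lee_fin (le_trans (gM x)) // ler_norm.
Qed.

Section cantor_probability.
Variables (R : realType) (T : ptopologicalType) (e : cantor_space -> T).
Hypothesis e_cont : continuous e.

(* [uniform_prob] lives on [measurableTypeR R], the Lebesgue copy of [R]. *)
Definition cantor_param : measurableTypeR R -> borel T := e \o rat_cut (R := R).

Lemma measurable_cantor_param : measurable_fun setT cantor_param.
Proof.
exact: measurableT_comp (continuous_borel_measurable e_cont) (@measurable_rat_cut R).
Qed.

HB.instance Definition _ :=
  isMeasurableFun.Build _ _ _ _ cantor_param measurable_cantor_param.

Definition cantor_prob : probability (borel T) R :=
  distribution (uniform_prob (@ltr01 R)) cantor_param.

Lemma cantor_prob_set1 (x : T) : injective e -> cantor_prob [set x] = 0%E.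
Proof.
move=> e_inj; rewrite /cantor_prob /distribution /pushforward /=.
have [[y ey]|nx] := pselect (exists y, cantor_param y = x); last first.
  rewrite (_ : _ @^-1` _ = set0) ?measure0 //.
  by apply/seteqP; split => y // eyx; apply: nx; exists y.
rewrite (_ : _ @^-1` _ = [set y]) ?uniform_prob_set1 //.
apply/seteqP; split => z /=; last by move=> ->.
by move=> ezx; apply: (@rat_cut_inj R); apply: e_inj; exact: etrans ezx (esym ey).
Qed.

Lemma cantor_prob_ae_range (A : set T) : measurable (A : set (borel T)) ->
  range e `<=` A -> \forall x \ae cantor_prob, A x.
Proof.
move=> mA eA; apply/negligibleP; first exact: measurableC.
rewrite /cantor_prob /distribution /pushforward /=.
rewrite (_ : _ @^-1` _ = set0) ?measure0 //.
by apply/seteqP; split => y //= /(_ (eA _ (imageT _ _))).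
Qed.

End cantor_probability.

Section weak_convergence_to_dirac.
Variables (R : realType) (K : pmetricType R).
Hypothesis K_compact : compact [set: K].
Variable mu : probability (borel K) R.

Lemma continuous_norm_bounded (f : K -> R) : continuous f ->
  exists M, forall x, `|f x| <= M.
Proof.
move=> cf; have /compact_bounded[M [_ HM]] : compact (f @` setT).
  by apply: continuous_compact => //; exact: continuous_subspaceT.
by exists (M + 1) => x; apply: HM (imageT f x); rewrite ltrDl.
Qed.

Lemma integ_gpush (phi : K -> K) (f : K -> R) :
  measurable_fun setT (phi : borel K -> borel K) -> continuous f ->
  integ (gpush phi mu) f = fine (\int[mu]_x (f (phi x))%:E).
Proof.
move=> mphi cf; have [M fM] := continuous_norm_bounded cf.
have mf := continuous_borel_measurable_real cf.
have mEf : measurable_fun setT (EFin \o f : borel K -> \bar R) by exact/measurable_EFinP.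
rewrite /integ /gpush integral_pushforward // preimage_setT.
apply: (@finite_measure_integrable_bounded _ _ _ mu _ M) => [|x]; last exact: fM.
exact: measurableT_comp mf mphi.
Qed.

Lemma integ_gpush_cvg_dirac (phi : nat -> K -> K) (p : K) (f : K -> R) :
  (forall n, measurable_fun setT (phi n : borel K -> borel K)) -> continuous f ->
  (\forall x \ae mu, phi ^~ x @ \oo --> p) ->
  integ (gpush (phi n) mu) f @[n --> \oo] --> f p.
Proof.
move=> mphi cf phi_p; have [M fM] := continuous_norm_bounded cf.
have mf := continuous_borel_measurable_real cf.
have mfphi n : measurable_fun setT (fun x : borel K => (f (phi n x))%:E).
  by apply/measurable_EFinP; exact: measurableT_comp mf (mphi n).
under eq_fun do rewrite integ_gpush //.
apply: fine_cvg.
have -> : (f p)%:E = (\int[mu]_x (cst (f p)%:E) x)%E.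
  by rewrite integral_cst // [X in (_ * X)%E]probability_setT mule1.
have phi_f : \forall x \ae mu,
    setT x -> (f (phi n x))%:E @[n --> \oo] --> cst (f p)%:E x.
  have mu_filter : Filter (almost_everywhere mu) := ae_filter_ringOfSetsType mu.
  apply: filterS phi_p => x phix _; apply: cvg_EFin; first exact: nearW.
  exact: cvg_comp phix (cf p).
have f_bound : \forall x \ae mu, forall n, setT x -> (`|(f (phi n x))%:E| <= (M%:E))%E.
  by apply: aeW => x n _; rewrite lee_fin.
by have [] := dominated_convergence measurableT mfphi (measurable_cst _) phi_f
  (finite_measure_integrable_cst mu M measurableT) f_bound.
Qed.

Lemma wstar_diff_to0_ae_cvg (phi psi : nat -> K -> K) (p : K) :
  (forall n, measurable_fun setT (phi n : borel K -> borel K)) ->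
  (forall n, measurable_fun setT (psi n : borel K -> borel K)) ->
  (\forall x \ae mu, phi ^~ x @ \oo --> p) ->
  (\forall x \ae mu, psi ^~ x @ \oo --> p) ->
  wstar_diff_to0 (fun n => gpush (phi n) mu) (fun n => gpush (psi n) mu).
Proof.
move=> mphi mpsi phi_p psi_p f cf; rewrite -(subrr (f p)).
by apply: cvgB; exact: integ_gpush_cvg_dirac.
Qed.

End weak_convergence_to_dirac.

Lemma action_invK (G T : Type) (Gl : group_law G) (a : G -> T -> T) :
  is_action Gl a -> forall g x, a (ginv Gl g) (a g x) = x.
Proof. by move=> [a1 aM] g x; rewrite -aM gmulVg a1. Qed.

Unset Implicit Arguments.

Theorem lemma1p6 (R : realType) (G : Type) (Gl : group_law G)
  (countG : countable [set: G])
  (X : metricType R) (aX : G -> X -> X)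
  (properX : proper_metric X) (isoX : isometric_action Gl aX)
  (K : pmetricType R) (aK : G -> K -> K)
  (KGsp : compact_G_space Gl aK)
  (noinv : ~ carries_invariant_probability aK)
  (Kstar : set K) (Kstar_borel : @measurable _ (borel K) Kstar)
  (Kstar_inv : forall g x, Kstar x -> Kstar (aK g x))
  (Kstar_cantor : exists B : set K, B `<=` Kstar /\ borel_cantor_subset B)
  (conv : forall g : nat -> G, escapes aX g ->
     exists (s : nat -> nat) (xim xip : K), strictly_increasing s /\
       forall xi, Kstar xi -> xi <> xim ->
         (fun n => aK (g (s n)) xi) @ \oo --> xip) :
  properly_proximal Gl aX.
Proof.
have [K_compact [aK_action aK_cont]] := KGsp.
have [B [BKstar [_ [e [e' [e_cont [e_range [e'K _]]]]]]]] := Kstar_cantor.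
have e_inj : injective e := can_inj e'K.
pose eta := cantor_prob R e_cont.
have eta_filter : Filter (almost_everywhere eta) := ae_filter_ringOfSetsType eta.
have eta_Kstar : \forall x \ae eta, Kstar x.
  apply: cantor_prob_ae_range => // _ [z _ <-].
  by apply: BKstar; rewrite -e_range; exact: imageT.
have maK k : measurable_fun setT (aK k : borel K -> borel K).
  exact: continuous_borel_measurable.
exists 1%N, (fun=> K), (fun=> aK), (fun=> eta).
split; [by [] | split; [by [] | split]].
  by move=> _ x; exact: cantor_prob_set1.
move=> g /conv[s [xim [xip [s_incr s_conv]]]]; exists ord0, s; split => // h.
have cvg_xip k : \forall x \ae eta, aK (g (s n)) (aK k x) @[n --> \oo] --> xip.
  have eta_neq := ae_neq (cantor_prob_set1 R e_cont (aK (ginv Gl k) xim) e_inj).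
  apply: (filterS2 eta_filter _ eta_Kstar eta_neq) => x Kx kx.
  apply: s_conv; first exact: Kstar_inv.
  by move=> kxim; apply: kx; rewrite -kxim action_invK.
apply: (wstar_diff_to0_ae_cvg K_compact (p := xip)) => [n|n||].
- exact: maK.
- exact: maK.
- apply: filterS (cvg_xip h) => x.
  suff -> : (fun n => aK (gmul Gl (g (s n)) h) x) = (fun n => aK (g (s n)) (aK h x)).
    by [].
  by apply/funext => n; exact: aK_action.2.
- apply: filterS (cvg_xip (gone Gl)) => x.
  by rewrite aK_action.1.
Qed.
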